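(* Let $T$ be a reducing triangulation (possibly infinite, e.g. lifted to a covering space) of an oriented surface without boundary. Let $C$ and $C'$ be two disjoint simple closed walks in $T$ that together bound an annulus. Then $C$ and $C'$ are not both reduced closed walks.
   Context: A triangulation is an embedded graph whose faces are all open disks bounded by three edge-sides. A reducing triangulation $T$ of an oriented surface without boundary is a triangulation in which every vertex has degree at least $8$ and each triangle is colored red or blue so that adjacent triangles have different colors. It may be infinite, for instance when lifted to a covering space together with its colors. Suppose a walk traverses a directed edge $e$ into a vertex $v$ and then leaves $v$ along a directed edge $e'$. This occurrence of $v$ makes a $k$-turn ($k\ge 0$) if exactly $k$ triangles around $v$ lie to the left of the length-two walk $e\,e'$, between $e$ and $e'$ in the cyclic order around $v$. It makes a $-k$-turn ($k\ge 1$) if exactly $k$ triangles lie to its right. A turn is named by an integer in $\{-3,\dots,3\}$ when possible, which is unambiguous since degrees are at least $8$; otherwise it is named by the positive integer. A $k_b$-turn (resp. $k_r$-turn) is a $k$-turn in which the triangle to the left of $e$ is blue (resp. red). A bad turn is a $0$-turn, a $1$-turn, a $-1$-turn, a $2_r$-turn or a $-2_r$-turn. A closed walk, whose vertices are cyclically ordered and all interior, is a reduced closed walk if none of its vertices makes a bad turn, not all of its vertices make $3_r$-turns, and not all of its vertices make $-3_b$-turns. Reversing a closed walk preserves reducedness. *)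

From mathcomp Require Import all_boot.
From Stdlib Require List.
Set Implicit Arguments. Unset Strict Implicit. Unset Printing Implicit Defensive.

(* A (possibly infinite) triangulation of an oriented surface without
   boundary, as an oriented combinatorial map:
   - darts = directed edges (edge-sides);
   - alpha = reversal of a dart (fixed-point-free involution);
   - sigma = counterclockwise rotation of the darts leaving a vertex
     (a permutation with inverse sigmai, finite orbits = vertices);
   - faces = orbits of phi := sigmai \o alpha; phi x runs along the boundary
     of the face lying to the LEFT of x; every face is a triangle
     (phi has order exactly 3 on every dart). *)
Record tmap := TMap {
  dart :> Type;
  alpha : dart -> dart;
  sigma : dart -> dart;
  sigmai : dart -> dart;
  alphaK : forall x, alpha (alpha x) = x;
  alpha_nofix : forall x, alpha x <> x;
  sigmaK : forall x, sigmai (sigma x) = x;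
  sigmaiK : forall x, sigma (sigmai x) = x;
  sigma_finite : forall x, exists2 k, 0 < k & iter k sigma x = x;
  face_tri : forall x, iter 3 (fun y => sigmai (alpha y)) x = x;
  face_nofix : forall x, sigmai (alpha x) <> x
}.
Arguments alpha {t}. Arguments sigma {t}. Arguments sigmai {t}.

Section Defs.
Variable T : tmap.
Implicit Types (x y e f : T) (w : nat -> T).

Definition phi x : T := sigmai (alpha x).

Definition same_vertex x y := exists k, iter k sigma x = y.
Definition same_face x y := exists k, iter k phi x = y.
Definition same_edge x y := y = x \/ y = alpha x.

(* Reducing triangulation; [red x = true] means the triangle to the left of
   x (its face) is red, [false] means blue. *)
Definition reducing (red : T -> bool) : Prop :=
  [/\ (forall x k, 0 < k < 8 -> iter k sigma x <> x),
      (forall x, red (phi x) = red x)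
    & (forall x, red (alpha x) <> red x)].

(* Turns at the vertex v reached by the incoming dart e and left by the
   outgoing dart e'.  Triangles around v between e and e' on the left of the
   walk e e' are the corners met when rotating clockwise (sigmai) from
   alpha e to e'. *)
Definition lturn (k : nat) e e' :=
  iter k sigmai (alpha e) = e' /\ forall j, j < k -> iter j sigmai (alpha e) <> e'.
Definition rturn (k : nat) e e' :=
  0 < k /\ iter k sigma (alpha e) = e' /\
  forall j, j < k -> iter j sigma (alpha e) <> e'.

(* the triangle to the left of the incoming dart e is the face of e *)
Definition bad_turn (red : T -> bool) e e' :=
  lturn 0 e e' \/ lturn 1 e e' \/ rturn 1 e e' \/
  (lturn 2 e e' /\ red e) \/ (rturn 2 e e' /\ red e).
Definition turn_3r (red : T -> bool) e e' := lturn 3 e e' /\ red e.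
Definition turn_m3b (red : T -> bool) e e' := rturn 3 e e' /\ ~~ red e.

(* A closed walk of length n > 0: an n-periodic sequence of darts, the head
   of w i being the tail of w i.+1.  The i-th vertex occurrence is between
   w i and w i.+1. *)
Definition closed_walk (n : nat) w :=
  [/\ 0 < n, (forall i, w (i + n) = w i)
    & forall i, same_vertex (alpha (w i)) (w i.+1)].

Definition simple_walk (n : nat) w :=
  forall i j, i < j < n -> ~ same_vertex (w i) (w j).

Definition disjoint_walks (n : nat) w (n' : nat) w' :=
  forall i j, ~ same_vertex (w i) (w' j).

Definition reduced_walk (red : T -> bool) (n : nat) w :=
  [/\ closed_walk n w,
      (forall i, i < n -> ~ bad_turn red (w i) (w i.+1)),
      ~ (forall i, i < n -> turn_3r red (w i) (w i.+1))
    & ~ (forall i, i < n -> turn_m3b red (w i) (w i.+1))].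

Definition on_walk (n : nat) w x :=
  exists2 i, i < n & (x = w i \/ x = alpha (w i)).

Definition finite_pred (P : T -> Prop) :=
  exists l : seq T, forall x, P x -> List.In x l.

Fixpoint Rdistinct (R : T -> T -> Prop) (l : seq T) : Prop :=
  if l is x :: l' then (forall y, List.In y l' -> ~ R x y) /\ Rdistinct R l'
  else True.

Definition nclasses (P : T -> Prop) (R : T -> T -> Prop) (k : nat) :=
  exists l : seq T, [/\ size l = k, (forall y, List.In y l -> P y),
    (forall x, P x -> exists2 y, List.In y l & R y x) & Rdistinct R l].

(* connectivity of the closed subcomplex formed by the faces in inF
   (two closed triangles are adjacent when they share a vertex) *)
Inductive conn (P : T -> Prop) (x : T) : T -> Prop :=
  | conn_refl : conn P x x
  | conn_step y z : conn P x y -> P z ->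
      same_vertex y z \/ same_face y z -> conn P x z.

(* C = (n,w) and C' = (n',w') together bound an annulus: there is a finite
   set of triangles (given by the darts of their boundaries, inF) whose
   union K satisfies
   - the boundary edges of K (edges with exactly one side in K) are exactly
     the edges of C and C'  (this makes K a compact surface with boundary
     C u C', the vertex links being arcs or circles automatically),
   - K is connected,
   - chi(K) = V - E + F = 0,
   so K is a connected compact orientable surface with two boundary circles
   and Euler characteristic 0, i.e. an annulus. *)
Definition bound_annulus (n : nat) w (n' : nat) w' :=
  exists inF : T -> Prop,
  [/\ (forall x, inF (phi x) <-> inF x),
      finite_pred inF,
      (forall x, (inF x /\ ~ inF (alpha x)) \/ (~ inF x /\ inF (alpha x)) <->
                 on_walk n w x \/ on_walk n' w' x),
      (forall x y, inF x -> inF y -> conn inF x y)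
    & exists V E F,
        [/\ nclasses inF same_vertex V,
            nclasses (fun x => inF x \/ inF (alpha x)) same_edge E,
            nclasses inF same_face F
          & V + F = E]].

End Defs.

(* Write K for the annulus, viewed as the set of darts whose left triangle lies in K.
   Since C and C' are simple, disjoint and make up the whole boundary of K, the
   corners of K around a vertex of C or C' form a single arc of t corners, and the
   absence of bad turns gives t >= 2, with t = 2 only for a blue 2-turn.  If t_v
   counts the corners of K at v and b_v its arcs, Euler's formula V - E + F = 0
   together with 3F = sum t_v and 2E = sum (t_v + b_v) gives
   sum_v (t_v + 3 b_v - 6) = 0.  An interior vertex contributes t_v - 6 >= 2, a
   boundary vertex t_v - 3 >= -1; adding to each vertex the number of blue arc ends
   minus the number of blue arc starts, which sums to zero because alpha \o sigma
   pairs them across boundary edges, makes every contribution nonnegative.  Hence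
   there are no interior vertices, every arc has exactly 3 corners and every triangle
   of K has exactly one boundary edge.  Along a reduced walk all turns are then
   +-3-turns of a single colour, and reducedness forces the triangles of K along the
   boundary to be blue; but the second corner of any arc is a red such triangle. *)
From HB Require Import structures.
From mathcomp Require Import all_boot boolp zify.
From Stdlib Require List.
Set Implicit Arguments. Unset Strict Implicit. Unset Printing Implicit Defensive.

(* Classical decidable equality on darts, so that finite sets of darts can be
   handled as duplicate-free sequences. *)
HB.instance Definition _ (T : tmap) := gen_eqMixin (dart T).

Lemma ex_minn_prop (P : nat -> Prop) :
  (exists k, P k) -> exists k, P k /\ forall j, j < k -> ~ P j.
Proof.
case=> k Pk; have exP : exists k, `[< P k >] by exists k; apply/asboolP.
case: (ex_minnP exP) => m /asboolP Pm min_m; exists m; split=> // j jm /asboolP Pj.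
by have := min_m j Pj; rewrite leqNgt jm.
Qed.

Lemma In_mem (T : eqType) (x : T) (s : seq T) : List.In x s <-> x \in s.
Proof.
elim: s => //= y s IHs; rewrite in_cons IHs.
by split=> [[->|->] | /orP[/eqP|]]; rewrite ?eqxx ?orbT; auto.
Qed.

Lemma sum_leq_eq (I : eqType) (r : seq I) (F G : I -> nat) :
  (forall i, i \in r -> F i <= G i) -> \sum_(i <- r) G i = \sum_(i <- r) F i ->
  forall i, i \in r -> G i = F i.
Proof.
elim: r => // j r IHr FG; rewrite !big_cons => eq_sum i.
have FGj := FG j (mem_head j r).
have FGr : \sum_(k <- r) F k <= \sum_(k <- r) G k.
  by rewrite big_seq [leqRHS]big_seq; apply: leq_sum => k kr; apply: FG; rewrite inE kr orbT.
rewrite inE => /orP[/eqP-> | ir]; first by lia.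
by apply: IHr ir => [k kr | ]; [apply: FG; rewrite inE kr orbT | lia].
Qed.

Lemma sum_nat_const_seq (I : Type) (r : seq I) c : \sum_(i <- r) c = c * size r.
Proof. by rewrite big_const_seq count_predT iter_addn_0. Qed.

Section Rotation.
Variable T : tmap.
Implicit Types x y z a b : T.

Lemma iter_sigmaK k : cancel (iter k (@sigma T)) (iter k sigmai).
Proof. by elim: k => // k IHk x; rewrite iterSr iterS sigmaK IHk. Qed.

Lemma iter_sigmaiK k : cancel (iter k (@sigmai T)) (iter k sigma).
Proof. by elim: k => // k IHk x; rewrite iterSr iterS sigmaiK IHk. Qed.

Lemma sigmai_iterS k x : sigmai (iter k.+1 sigma x) = iter k sigma x.
Proof. by rewrite iterS sigmaK. Qed.

Lemma iter_sigma_periodic x : exists2 p, 0 < p & forall m, iter (m * p) sigma x = x.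
Proof.
case: (sigma_finite x) => p p_gt0 px; exists p => // m.
by elim: m => // m IHm; rewrite mulSn iterD IHm px.
Qed.

Lemma same_vertex_refl x : same_vertex x x. Proof. by exists 0. Qed.

Lemma same_vertex_iter k x : same_vertex x (iter k sigma x). Proof. by exists k. Qed.

Lemma same_vertex_trans x y z : same_vertex x y -> same_vertex y z -> same_vertex x z.
Proof. by case=> i <- [j <-]; exists (j + i); rewrite iterD. Qed.

Lemma same_vertex_sym x y : same_vertex x y -> same_vertex y x.
Proof.
case=> j <-; case: (iter_sigma_periodic x) => p p_gt0 px.
by exists (j * p - j); rewrite -iterD subnK ?px // leq_pmulr.
Qed.

Definition rot_dist a b m := iter m sigma a = b /\ forall j, j < m -> iter j sigma a <> b.

Lemma rot_distP a b : same_vertex a b -> exists m, rot_dist a b m.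
Proof. by move/ex_minn_prop. Qed.

Lemma rot_dist_neq a b m j k : rot_dist a b m -> j < k < m -> iter j sigma a <> iter k sigma a.
Proof.
case=> ab min_m /andP[jk km] eq_jk; apply: (min_m (m - k + j)); first by lia.
have mk : m = m - k + k by lia.
by rewrite -ab [in RHS]mk !iterD eq_jk.
Qed.

Lemma iter_sigmai_eq k x y : iter k sigmai x = y <-> iter k sigma y = x.
Proof. by split=> <-; rewrite ?iter_sigmaiK ?iter_sigmaK. Qed.

Lemma lturnE k e e' : lturn k e e' <-> rot_dist e' (alpha e) k.
Proof.
rewrite /lturn /rot_dist iter_sigmai_eq.
by split=> -[-> min_k]; split=> // j jk /iter_sigmai_eq; apply: min_k.
Qed.

Lemma uniq_iter_sigma z t :
  (forall j k, j < k < t -> iter j sigma z <> iter k sigma z) ->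
  uniq [seq iter j sigma z | j <- iota 0 t].
Proof.
move=> neq; rewrite map_inj_in_uniq ?iota_uniq // => j k.
rewrite !mem_iota !add0n => /andP[_ jt] /andP[_ kt] e.
by case: (ltngtP j k) => // [jk | kj]; [case: (neq j k) | case: (neq k j)]; rewrite ?jk ?kj.
Qed.

End Rotation.

Section Faces.
Variable T : tmap.
Implicit Types x y z : T.

Lemma phi3 x : phi (phi (phi x)) = x. Proof. exact: face_tri. Qed.

Lemma phi_inj : injective (@phi T).
Proof. by move=> x y /(congr1 sigma); rewrite /phi !sigmaiK => /(can_inj (@alphaK T)). Qed.

Lemma phi_alpha x : phi (alpha x) = sigmai x. Proof. by rewrite /phi alphaK. Qed.

Lemma sigma_phi x : sigma (phi x) = alpha x. Proof. exact: sigmaiK. Qed.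

Lemma phi_alpha_sigma x : phi (alpha (sigma x)) = x. Proof. by rewrite phi_alpha sigmaK. Qed.

Lemma phi2 x : phi (phi x) = alpha (sigma x).
Proof. by apply: phi_inj; rewrite phi3 phi_alpha_sigma. Qed.

Lemma phi_neq x : phi x <> x. Proof. exact: face_nofix. Qed.

Lemma phi2_neq x : phi (phi x) <> x.
Proof. by move=> /(congr1 (@phi T)); rewrite phi3 => /esym; apply: phi_neq. Qed.

Lemma same_face_phi x : same_face x (phi x). Proof. by exists 1. Qed.

Lemma same_face_phi2 x : same_face x (phi (phi x)). Proof. by exists 2. Qed.

Lemma same_faceP x y : same_face x y -> [\/ y = x, y = phi x | y = phi (phi x)].
Proof.
case=> k <-; have phi3k m : iter (m * 3) (@phi T) x = x.
  by elim: m => // m IHm; rewrite mulSn iterD IHm /= phi3.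
rewrite (divn_eq k 3) addnC iterD phi3k.
by case: (k %% 3) (ltn_pmod k (isT : 0 < 3)) => [|[|[|]]] //= _; constructor.
Qed.

Lemma same_face_sym x y : same_face x y -> same_face y x.
Proof.
by case/same_faceP=> ->; [exists 0 | exists 2; rewrite /= phi3 | exists 1; rewrite /= phi3].
Qed.

Lemma same_face_trans x y z : same_face x y -> same_face y z -> same_face x z.
Proof. by case=> i <- [j <-]; exists (j + i); rewrite iterD. Qed.

Lemma same_edge_euclid x y z : same_edge x z -> same_edge y z -> same_edge x y.
Proof.
rewrite /same_edge => -[->|->] [e|e].
- by left.
- by right; rewrite e alphaK.
- by right.
- by left; apply: (can_inj (@alphaK T)).
Qed.

End Faces.

Section Colouring.
Variables (T : tmap) (red : T -> bool).
Hypothesis red_ok : reducing red.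
Implicit Types x y : T.

Lemma red_alpha x : red (alpha x) = ~~ red x.
Proof. by case: red_ok => _ _ /(_ x); case: (red x); case: (red (alpha x)). Qed.

Lemma red_phi x : red (phi x) = red x. Proof. by case: red_ok. Qed.

Lemma red_sigma x : red (sigma x) = ~~ red x.
Proof. by rewrite -{2}(phi_alpha_sigma x) red_phi red_alpha negbK. Qed.

Lemma red_sigmai x : red (sigmai x) = ~~ red x.
Proof. by rewrite -{2}(sigmaiK x) red_sigma negbK. Qed.

Lemma red_iter_sigma k x : red (iter k sigma x) = odd k (+) red x.
Proof. by elim: k => //= k IHk; rewrite red_sigma IHk; case: (odd k); case: (red x). Qed.

Lemma red_iter_sigmai k x : red (iter k sigmai x) = odd k (+) red x.
Proof. by elim: k => //= k IHk; rewrite red_sigmai IHk; case: (odd k); case: (red x). Qed.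

Lemma red_rturn k e e' : rturn k e e' -> red e' = odd k (+) ~~ red e.
Proof. by case=> _ [<- _]; rewrite red_iter_sigma red_alpha. Qed.

Lemma red_lturn k e e' : lturn k e e' -> red e' = odd k (+) ~~ red e.
Proof. by case=> <- _; rewrite red_iter_sigmai red_alpha. Qed.

Lemma red_same_face x y : same_face x y -> red y = red x.
Proof. by case/same_faceP=> ->; rewrite ?red_phi. Qed.

Lemma iter_sigma_lt8_neq x j k : j < k < 8 -> iter j sigma x <> iter k sigma x.
Proof.
case/andP=> jk k8 eq_jk; case: red_ok => deg8 _ _.
apply: (deg8 (iter j sigma x) (k - j)); first by apply/andP; split; lia.
by rewrite -iterD subnK ?(ltnW jk).
Qed.

End Colouring.

Definition boundary (T : tmap) (inF : T -> Prop) (x : T) := ~ (inF x <-> inF (alpha x)).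

(* A boundary edge-side of K with K on its left; by [boundary_leftE] it is also the
   first dart of a counterclockwise run of darts of K around its tail. *)
Definition boundary_left (T : tmap) (inF : T -> Prop) (x : T) := inF x /\ ~ inF (alpha x).

Definition corner_arc (T : tmap) (inF : T -> Prop) (z : T) (t : nat) :=
  [/\ forall j, j < t -> inF (iter j sigma z),
      ~ inF (iter t sigma z),
      forall j k, j < k < t -> iter j sigma z <> iter k sigma z &
      forall x, same_vertex z x -> inF x -> exists2 j, j < t & x = iter j sigma z].

(* The arcs met along a reduced walk: a turn spans at least two triangles on the side
   of K, and exactly two only when it is a 2_b- or a -2_b-turn. *)
Definition reduced_arc (T : tmap) (red : T -> bool) (inF : T -> Prop) (z : T) (t : nat) :=
  [/\ corner_arc inF z t, 2 <= t & (t = 2 -> ~~ red (sigma z))].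

Section Region.
Variables (T : tmap) (inF : T -> Prop).
Hypothesis inF_phi : forall x, inF (phi x) <-> inF x.
Implicit Types x y z a b : T.

Lemma inF_alpha x : inF (alpha x) <-> inF (sigmai x).
Proof. by rewrite -phi_alpha inF_phi. Qed.

Lemma boundary_leftE z : boundary_left inF z <-> inF z /\ ~ inF (sigmai z).
Proof. by rewrite /boundary_left inF_alpha. Qed.

Lemma vertex_boundary_left x y :
  same_vertex y x -> inF x -> ~ inF y -> exists2 z, boundary_left inF z & same_vertex x z.
Proof.
move=> yx x_in y_out; have ex_in : exists k, inF (iter k sigma y).
  by case: yx => k ek; exists k; rewrite ek.
case/ex_minn_prop: ex_in => [[|k] [k_in min_k]] //; exists (iter k.+1 sigma y).
  by apply/boundary_leftE; rewrite sigmai_iterS; split=> //; apply: min_k.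
exact: same_vertex_trans (same_vertex_sym yx) (same_vertex_iter _ _).
Qed.

Lemma corner_arc_start_uniq z t x :
  corner_arc inF z t -> boundary_left inF x -> same_vertex z x -> x = z.
Proof.
case=> arc_in _ _ arc_cover /boundary_leftE[x_in x_out] zx.
case: (arc_cover x zx x_in) => [[|j]] // jt ex.
by case: x_out; rewrite ex sigmai_iterS; apply: arc_in; lia.
Qed.

Lemma boundary_left_in x : boundary inF x -> inF x -> boundary_left inF x.
Proof. by move=> bd_x x_in; split=> // ax; apply: bd_x. Qed.

Lemma boundaryE x :
  boundary inF x <-> (inF x /\ ~ inF (alpha x)) \/ (~ inF x /\ inF (alpha x)).
Proof.
by rewrite /boundary; case: (pselect (inF x)); case: (pselect (inF (alpha x))); tauto.
Qed.

Lemma boundary_left_boundary x : boundary_left inF x -> boundary inF x.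
Proof. by case=> x_in ax_out [/(_ x_in)]. Qed.

Lemma boundary_boundary_left x :
  boundary inF x -> boundary_left inF x \/ boundary_left inF (alpha x).
Proof. by rewrite boundaryE /boundary_left alphaK; tauto. Qed.

Definition only_boundary a b :=
  forall x, same_vertex a x -> boundary inF x -> x = a \/ x = b.

Lemma only_boundary_sym a b : same_vertex a b -> only_boundary a b -> only_boundary b a.
Proof.
move=> ab only_ab x bx x_bd; rewrite or_comm.
exact: only_ab (same_vertex_trans ab bx) x_bd.
Qed.

Lemma rot_dist_inF a b m :
  only_boundary a b -> rot_dist a b m -> forall j, j < m -> (inF (iter j sigma a) <-> inF a).
Proof.
move=> only_ab dist_ab; elim=> // j IHj jm; rewrite -IHj ?(ltnW jm) //.
apply: contrapT => not_iff.
have bd : boundary inF (iter j.+1 sigma a) by rewrite /boundary inF_alpha sigmai_iterS.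
case: (only_ab _ (same_vertex_iter _ _) bd) => [ja | jb].
- by apply: (rot_dist_neq (j := 0) (k := j.+1) dist_ab); rewrite ?jm ?ja.
- by case: dist_ab => _ /(_ j.+1 jm).
Qed.

Lemma rot_dist_gt0 a b m : a <> b -> rot_dist a b m -> 0 < m.
Proof. by case: m => // ab_neq [ab _]. Qed.

Lemma rot_dist_alpha a b m :
  only_boundary a b -> 0 < m -> rot_dist a b m -> (inF (alpha b) <-> inF a).
Proof.
move=> only_ab m_gt0 dist_ab; rewrite inF_alpha -(proj1 dist_ab) -(prednK m_gt0) sigmai_iterS.
by apply: (rot_dist_inF only_ab dist_ab); rewrite prednK.
Qed.

Lemma rot_dist_boundary a b m :
  only_boundary a b -> boundary inF b -> 0 < m -> rot_dist a b m -> (inF b <-> ~ inF a).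
Proof.
move=> only_ab bd_b m_gt0 /(rot_dist_alpha only_ab m_gt0) alpha_b.
by move: bd_b; rewrite /boundary alpha_b; case: (pselect (inF a)); case: (pselect (inF b)); tauto.
Qed.

Lemma rot_dist_arc a b m :
  only_boundary a b -> a <> b -> boundary inF b -> inF a -> rot_dist a b m -> corner_arc inF a m.
Proof.
move=> only_ab ab_neq bd_b a_in dist_ab.
have m_gt0 := rot_dist_gt0 ab_neq dist_ab.
have b_out : ~ inF b by move/(rot_dist_boundary only_ab bd_b m_gt0 dist_ab).
have ab : same_vertex a b by exists m; case: dist_ab.
have [m' dist_ba] := rot_distP (same_vertex_sym ab).
have m'_gt0 := rot_dist_gt0 (nesym ab_neq) dist_ba.
split=> [j jm | | j k | x /ex_minn_prop[k [ek min_k]] x_in].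
- exact/(rot_dist_inF only_ab dist_ab jm).
- by case: dist_ab => ->.
- exact: rot_dist_neq dist_ab.
case: (ltnP k m) => km; first by exists k.
have ex : x = iter (k - m) sigma b by rewrite -ek -(proj1 dist_ab) -iterD subnK.
case: (ltnP (k - m) m') => km'.
  by case: b_out; apply/(rot_dist_inF (only_boundary_sym ab only_ab) dist_ba km'); rewrite -ex.
case: (min_k (k - m - m')); first by lia.
by rewrite ex -(proj1 dist_ba) -iterD subnK.
Qed.

End Region.

Lemma on_walk_same_vertex (T : tmap) n (w : nat -> T) x :
  closed_walk n w -> on_walk n w x -> exists i, same_vertex (w i) x.
Proof.
case=> _ _ link [i _ [-> | ->]]; first by exists i; apply: same_vertex_refl.
by exists i.+1; apply: same_vertex_sym.
Qed.

Section Walk.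
Variables (T : tmap) (red : T -> bool) (inF : T -> Prop).
Hypotheses (red_ok : reducing red) (inF_phi : forall x, inF (phi x) <-> inF x).
Variables (n : nat) (w : nat -> T).
Hypotheses (w_simple : simple_walk n w) (w_reduced : reduced_walk red n w).
Hypothesis w_boundary : forall x, on_walk n w x -> boundary inF x.
Hypothesis boundary_w : forall i x, same_vertex (w i) x -> boundary inF x -> on_walk n w x.
Implicit Types x y z : T.

Lemma walk_size_gt0 : 0 < n. Proof. by case: w_reduced => -[]. Qed.

Lemma walk_link i : same_vertex (alpha (w i)) (w i.+1). Proof. by case: w_reduced => -[]. Qed.

Lemma walk_mod i : w i = w (i %% n).
Proof.
case: w_reduced => -[_ wn _] _ _ _; rewrite {1}(divn_eq i n) addnC.
by elim: (i %/ n) => [|q IHq]; rewrite ?mul0n ?addn0 // mulSnr addnA wn.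
Qed.

Lemma walk_simple_mod p q : same_vertex (w p) (w q) -> p %% n = q %% n.
Proof.
rewrite (walk_mod p) (walk_mod q) => pq.
have := ltn_pmod p walk_size_gt0; have := ltn_pmod q walk_size_gt0.
case: (ltngtP (p %% n) (q %% n)) => // pq_lt qn pn.
- by exfalso; apply: (w_simple _ pq); apply/andP.
- by exfalso; apply: (w_simple _ (same_vertex_sym pq)); apply/andP.
Qed.

Lemma on_walk_w i : on_walk n w (w i).
Proof. by exists (i %% n); [rewrite ltn_pmod ?walk_size_gt0 | left; apply: walk_mod]. Qed.

Lemma on_walk_alpha_w i : on_walk n w (alpha (w i)).
Proof. by exists (i %% n); [rewrite ltn_pmod ?walk_size_gt0 | right; rewrite -(walk_mod i)]. Qed.

Lemma on_walk_vertex x : on_walk n w x -> exists2 i, i < n & x = alpha (w i) \/ x = w i.+1.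
Proof.
have n_gt0 := walk_size_gt0.
case=> j jn [->|->]; last by exists j => //; left.
case: j jn => [|j] jn; last by exists j => //; [lia | right].
exists n.-1; first lia.
by right; rewrite prednK //; case: w_reduced => -[_ /(_ 0)].
Qed.

Lemma walk_only_boundary i : only_boundary inF (alpha (w i)) (w i.+1).
Proof.
move=> x ax bd_x; have wx := same_vertex_trans (same_vertex_sym (walk_link i)) ax.
case: (boundary_w wx bd_x) => j _ [ex | ex]; subst x.
- by right; rewrite (walk_mod j) -(walk_simple_mod wx) -(walk_mod i.+1).
- left; have /walk_simple_mod : same_vertex (w i.+1) (w j.+1).
    exact: same_vertex_trans wx (walk_link j).
  rewrite -[i.+1]addn1 -[j.+1]addn1 => /eqP; rewrite eqn_modDr => /eqP ij.
  by rewrite (walk_mod j) -ij -(walk_mod i).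
Qed.

Lemma walk_not_bad i : i < n -> ~ bad_turn red (w i) (w i.+1).
Proof. by case: w_reduced => _ + _ _; apply. Qed.

Lemma walk_no_uturn i : i < n -> alpha (w i) <> w i.+1.
Proof. by move=> lt_in ae; apply: (walk_not_bad lt_in); left. Qed.

Lemma walk_side i : i < n -> (inF (alpha (w i.+1)) <-> inF (alpha (w i))).
Proof.
move=> lt_in; have [m dist] := rot_distP (walk_link i).
have m_gt0 := rot_dist_gt0 (walk_no_uturn lt_in) dist.
exact: (rot_dist_alpha inF_phi (@walk_only_boundary i) m_gt0 dist).
Qed.

Lemma walk_side_const i : i < n -> (inF (alpha (w i)) <-> inF (alpha (w 0))).
Proof. by elim: i => // i IHi lt_in; rewrite walk_side ?IHi //; lia. Qed.

Lemma walk_turn_right i : i < n -> inF (alpha (w i)) ->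
  exists t, reduced_arc red inF (alpha (w i)) t /\ rturn t (w i) (w i.+1).
Proof.
move=> lt_in a_in; have not_bad := walk_not_bad lt_in.
have [m dist] := rot_distP (walk_link i).
have m_gt0 := rot_dist_gt0 (walk_no_uturn lt_in) dist.
have arc := rot_dist_arc inF_phi (@walk_only_boundary i) (walk_no_uturn lt_in)
  (w_boundary (on_walk_w i.+1)) a_in dist.
have turn : rturn m (w i) (w i.+1) by [].
exists m; split=> //; split=> // [|m2].
- by case: m {dist arc} m_gt0 turn => [|[|m]] // _ turn; case: not_bad; do 2 right; left.
- rewrite red_sigma // red_alpha // negbK; apply/negP => red_e.
  by apply: not_bad; do 4 right; rewrite -m2.
Qed.

Lemma walk_turn_left i : i < n -> ~ inF (alpha (w i)) ->
  exists t, reduced_arc red inF (w i.+1) t /\ lturn t (w i) (w i.+1).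
Proof.
move=> lt_in a_out; have not_bad := walk_not_bad lt_in.
have only := only_boundary_sym (walk_link i) (@walk_only_boundary i).
have [m dist] := rot_distP (same_vertex_sym (walk_link i)).
have e_neq := nesym (walk_no_uturn lt_in).
have m_gt0 := rot_dist_gt0 e_neq dist.
have e_in : inF (w i.+1).
  apply: contrapT => e_out; apply: a_out.
  by apply/(rot_dist_boundary inF_phi only (w_boundary (on_walk_alpha_w i)) m_gt0 dist).
have arc := rot_dist_arc inF_phi only e_neq (w_boundary (on_walk_alpha_w i)) e_in dist.
have turn : lturn m (w i) (w i.+1) by apply/lturnE.
exists m; split=> //; split=> // [|m2].
- by case: m {dist arc} m_gt0 turn => [|[|m]] // _ turn; case: not_bad; right; left.
- have blue_e : ~~ red (w i) by apply/negP => red_e; apply: not_bad; do 3 right; left; rewrite -m2.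
  by rewrite red_sigma // (red_lturn red_ok turn) m2 /= negbK.
Qed.

Lemma walk_arcs x : on_walk n w x -> boundary_left inF x -> exists t, reduced_arc red inF x t.
Proof.
case/on_walk_vertex=> i lt_in x_at x_bl.
case: (pselect (inF (alpha (w i)))) => side.
- have [t [arc _]] := walk_turn_right lt_in side; exists t.
  suff -> : x = alpha (w i) by [].
  case: arc => arc _ _; apply: (corner_arc_start_uniq inF_phi arc x_bl).
  by case: x_at => ->; [apply: same_vertex_refl | apply: walk_link].
- have [t [arc _]] := walk_turn_left lt_in side; exists t.
  suff -> : x = w i.+1 by [].
  case: arc => arc _ _; apply: (corner_arc_start_uniq inF_phi arc x_bl).
  by case: x_at => ->; [apply: same_vertex_sym; apply: walk_link | apply: same_vertex_refl].
Qed.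

Section ArcsOfLength3.
Hypothesis arcs3 : forall z t, boundary_left inF z -> reduced_arc red inF z t -> t = 3.

Lemma walk_turn3 i : i < n ->
  (inF (alpha (w i)) /\ rturn 3 (w i) (w i.+1)) \/
  (~ inF (alpha (w i)) /\ lturn 3 (w i) (w i.+1)).
Proof.
move=> lt_in; case: (pselect (inF (alpha (w i)))) => side; [left | right]; split=> //.
- have [t [arc turn]] := walk_turn_right lt_in side.
  rewrite -(arcs3 _ arc) //; apply: boundary_left_in side.
  exact: w_boundary (on_walk_alpha_w i).
- have [t [arc turn]] := walk_turn_left lt_in side.
  rewrite -(arcs3 _ arc) //; apply: boundary_left_in (w_boundary (on_walk_w i.+1)) _.
  by case: arc => -[arc_in _ _ _] t_ge2 _; apply: (arc_in 0); lia.
Qed.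

Lemma walk_red_const i : i <= n -> red (w i) = red (w 0).
Proof.
elim: i => // i IHi lt_in; rewrite -IHi ?(ltnW lt_in) //.
case: (walk_turn3 lt_in) => [[_ /(red_rturn red_ok)] | [_ /(red_lturn red_ok)]] ->.
  by rewrite /= negbK.
by rewrite /= negbK.
Qed.

Lemma walk_right_red : inF (alpha (w 0)) -> red (w 0).
Proof.
move=> side; apply: contrapT => /negP blue; case: w_reduced => _ _ _; apply=> i lt_in.
case: (walk_turn3 lt_in) => [] [side_i turn]; last by case: side_i; apply/(walk_side_const lt_in).
by split=> //; rewrite walk_red_const ?(ltnW lt_in).
Qed.

Lemma walk_left_blue : ~ inF (alpha (w 0)) -> ~~ red (w 0).
Proof.
move=> side; apply/negP => red0; case: w_reduced => _ _ + _; apply=> i lt_in.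
case: (walk_turn3 lt_in) => [] [side_i turn]; first by case: side; apply/(walk_side_const lt_in).
by split=> //; rewrite walk_red_const ?(ltnW lt_in).
Qed.

Lemma walk_blue x : on_walk n w x -> boundary_left inF x -> ~~ red x.
Proof.
case/on_walk_vertex=> i lt_in [->|->] [x_in x_out].
- have side : inF (alpha (w 0)) by apply/(walk_side_const lt_in).
  by rewrite red_alpha // walk_red_const ?(ltnW lt_in) // walk_right_red.
- have side : ~ inF (alpha (w 0)) by move/(walk_side_const lt_in)/(walk_side lt_in).
  by rewrite walk_red_const // walk_left_blue.
Qed.

End ArcsOfLength3.

End Walk.

Section Counting.
Variable T : tmap.
Implicit Types (P Q : T -> Prop) (x y : T) (s L : seq T).

Definition class_reps P (R : T -> T -> Prop) L :=
  [/\ {in L, forall y, P y}, (forall x, P x -> exists2 y, y \in L & R y x) & Rdistinct R L].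

Lemma nclasses_mem P R k : nclasses P R k -> exists2 L, size L = k & class_reps P R L.
Proof.
case=> L [<- LP cover dist]; exists L; split=> // [y /In_mem | x /cover[y /In_mem]].
  exact: LP.
by exists y.
Qed.

Lemma count_Rdistinct (R : T -> T -> Prop) L (a : pred T) :
  Rdistinct R L -> (forall y y', a y -> a y' -> R y y') -> count a L = has a L.
Proof.
elim: L => //= y L IHL [yL distL] aR; rewrite IHL //.
case ay: (a y) => //=; suff -> : has a L = false by [].
by apply/hasP => -[y' /In_mem y'L ay']; apply: yL y' y'L (aR _ _ ay ay').
Qed.

Lemma finite_universe P :
  finite_pred P -> exists U, uniq U /\ forall x, P x \/ P (alpha x) -> x \in U.
Proof.
case=> l l_P; exists (undup (l ++ map alpha l)); split=> [|x]; first exact: undup_uniq.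
rewrite mem_undup mem_cat => -[/l_P/In_mem -> // | /l_P/In_mem ax].
by rewrite -(alphaK x) map_f ?orbT.
Qed.

Variable U : seq T.
Hypothesis U_uniq : uniq U.

Definition pcount Q := count (fun x => `[< Q x >]) U.

Lemma pcount_le P Q : (forall x, P x -> Q x) -> pcount P <= pcount Q.
Proof. by move=> PQ; apply: sub_count => x /asboolP/PQ/asboolP. Qed.

Lemma pcount0 Q : (forall x, ~ Q x) -> pcount Q = 0.
Proof.
by move=> nQ; apply/eqP; rewrite eqn0Ngt -has_count; apply/hasP => -[x _ /asboolP/nQ].
Qed.

Lemma pcount_gt0 Q : 0 < pcount Q -> exists x, Q x.
Proof. by rewrite -has_count => /hasP[x _ /asboolP]; exists x. Qed.

Lemma pcount_le1 Q : (forall x x', Q x -> Q x' -> x = x') -> pcount Q <= 1.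
Proof.
move=> Q_uniq; case: (pselect (exists x, Q x)) => [[x0 Qx0] | noQ]; last first.
  by rewrite pcount0 // => x Qx; apply: noQ; exists x.
apply: (leq_trans (sub_count (a2 := pred1 x0) _ _)) => [x /asboolP Qx | ].
  by rewrite /= (Q_uniq _ _ Qx Qx0).
by rewrite count_uniq_mem // leq_b1.
Qed.

Lemma pcount_seq Q s :
  uniq s -> {subset s <= U} -> (forall x, Q x <-> x \in s) -> pcount Q = size s.
Proof.
move=> s_uniq sU Qs; rewrite /pcount (eq_count (a2 := mem s)) => [|x]; last first.
  exact: asbool_equiv_eqP idP (Qs x).
rewrite -size_filter; apply/perm_size/uniq_perm; rewrite ?filter_uniq // => x.
by rewrite mem_filter andb_idr //; apply: sU.
Qed.

Lemma pcount_one Q c (b : bool) : (forall x, Q x <-> x = c /\ b) -> c \in U -> pcount Q = b.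
Proof.
case: b => Qc cU; last by apply: pcount0 => x /Qc[].
rewrite (@pcount_seq Q [:: c]) // => [x | x].
- by rewrite mem_seq1 => /eqP->.
- by rewrite mem_seq1 Qc; split=> [[->] | /eqP->].
Qed.

Lemma pcount_bij P Q (f : T -> T) : injective f ->
  (forall x, P x -> x \in U) -> (forall y, Q y -> y \in U) ->
  (forall x, P x -> Q (f x)) -> (forall y, Q y -> exists2 x, P x & f x = y) ->
  pcount P = pcount Q.
Proof.
move=> f_inj PU QU PQ QP; set s := filter (fun x => `[< P x >]) U.
have sP x : x \in s -> P x by rewrite mem_filter => /andP[/asboolP].
rewrite /pcount -size_filter -/s -(size_map f) -(pcount_seq (Q := Q)) //.
- by rewrite map_inj_uniq ?filter_uniq.
- by move=> y /mapP[x /sP/PQ/QU + ->].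
move=> y; split=> [/[dup] /QP[x Px <-] _ | /mapP[x /sP/PQ ? ->] //].
by apply: map_f; rewrite mem_filter PU // andbT; apply/asboolP.
Qed.

Lemma pcount_or P Q :
  pcount (fun x => P x \/ Q x) = pcount P + pcount (fun x => ~ P x /\ Q x).
Proof.
rewrite /pcount; elim: U => //= x s ->; rewrite addnACA; congr (_ + _).
by case: (asboolP (P x \/ Q x)); case: (asboolP (~ P x /\ Q x));
  case: (asboolP (P x)); case: (asboolP (Q x)) => //=; tauto.
Qed.

Lemma pcount_partition Q (R : T -> T -> Prop) L :
  Rdistinct R L -> (forall y y' x, R y x -> R y' x -> R y y') ->
  (forall x, Q x -> exists2 y, y \in L & R y x) ->
  pcount Q = \sum_(y <- L) pcount (fun x => Q x /\ R y x).
Proof.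
move=> distL R_euclid cover.
have count_sum (a : pred T) s : count a s = \sum_(x <- s) a x by rewrite -sumn_count sumnE big_map.
rewrite /pcount; under eq_bigr => y _ do rewrite count_sum.
rewrite count_sum exchange_big /=.
apply: eq_bigr => x _; rewrite -count_sum (count_Rdistinct (R := R)) //; last first.
  by move=> y y' /asboolP[_ Ryx] /asboolP[_ Ry'x]; apply: R_euclid Ryx Ry'x.
congr (nat_of_bool _); apply: (asbool_equiv_eqP hasP).
split=> [/[dup] /cover[y yL Ryx] Qx | [y _ /asboolP[]//]].
by exists y => //; apply/asboolP.
Qed.

End Counting.

Section Annulus.
Variables (T : tmap) (red : T -> bool) (inF : T -> Prop).
Hypotheses (red_ok : reducing red) (inF_phi : forall x, inF (phi x) <-> inF x).
Hypothesis arcs : forall x, boundary_left inF x -> exists t, reduced_arc red inF x t.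
Variable U : seq T.
Hypotheses (U_uniq : uniq U) (U_all : forall x, inF x \/ inF (alpha x) -> x \in U).
Implicit Types x y z : T.

Lemma U_in x : inF x -> x \in U. Proof. by move=> x_in; apply: U_all; left. Qed.

Let blue_end x := inF x /\ ~ inF (sigma x) /\ ~~ red x.
Let blue_start x := boundary_left inF x /\ ~~ red x.
Let at_vertex (Q : T -> Prop) y := pcount U (fun x => Q x /\ same_vertex y x).

Lemma arc_vertex_counts y z t :
  same_vertex y z -> boundary_left inF z -> corner_arc inF z t ->
  [/\ at_vertex inF y = t, at_vertex (boundary_left inF) y = 1,
      at_vertex blue_end y = ~~ red (iter t.-1 sigma z) & at_vertex blue_start y = ~~ red z].
Proof.
move=> yz z_bl arc; case: (arc) => arc_in arc_out arc_neq arc_cover.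
have t_gt0 : 0 < t by case: t {arc arc_in arc_neq arc_cover} arc_out => // /(_ z_bl.1).
have zx x : same_vertex y x -> same_vertex z x := same_vertex_trans (same_vertex_sym yz).
have start_uniq x : boundary_left inF x -> same_vertex y x -> x = z.
  by move=> x_bl /zx; exact: (corner_arc_start_uniq inF_phi arc x_bl).
have last_in : inF (iter t.-1 sigma z) by apply: arc_in; lia.
have last_out : ~ inF (sigma (iter t.-1 sigma z)) by rewrite -iterS prednK.
have yl : same_vertex y (iter t.-1 sigma z) := same_vertex_trans yz (same_vertex_iter _ _).
split.
- rewrite /at_vertex (pcount_seq U_uniq (s := [seq iter j sigma z | j <- iota 0 t])).
  + by rewrite size_map size_iota.
  + exact: uniq_iter_sigma.
  + by move=> x /mapP[j]; rewrite mem_iota => /andP[_ jt] ->; apply: U_in; apply: arc_in.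
  move=> x; split=> [[x_in /zx zx'] | /mapP[j]].
    by have [j jt ->] := arc_cover x zx' x_in; apply: map_f; rewrite mem_iota.
  rewrite mem_iota => /andP[_ jt] ->; split; first exact: arc_in.
  exact: same_vertex_trans yz (same_vertex_iter _ _).
- rewrite /at_vertex (pcount_one U_uniq (b := true) _ (U_in z_bl.1)) //.
  by move=> x; split=> [[x_bl yx] | [-> _]]; split=> //; apply: start_uniq.
- rewrite /at_vertex (pcount_one U_uniq (b := ~~ red (iter t.-1 sigma z)) _ (U_in last_in)) //.
  move=> x; split=> [[[x_in [x_out x_blue]] /zx zx'] | [-> blue]] //.
    have [j jt ex] := arc_cover x zx' x_in.
    suff jt1 : j = t.-1 by rewrite -jt1 -ex.
    case: (ltngtP j t.-1) => // c; last by lia.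
    by case: x_out; rewrite ex -iterS; apply: arc_in; lia.
- rewrite /at_vertex (pcount_one U_uniq (b := ~~ red z) _ (U_in z_bl.1)) //.
  by move=> x; split=> [[[x_bl x_blue] yx] | [-> blue]]; [rewrite -(start_uniq x) | ].
Qed.

Lemma interior_vertex_counts y :
  inF y -> ~ (exists2 z, boundary_left inF z & same_vertex y z) ->
  [/\ 8 <= at_vertex inF y, at_vertex (boundary_left inF) y = 0 & at_vertex blue_start y = 0].
Proof.
move=> y_in no_bl.
have all_in j : inF (iter j sigma y).
  apply: contrapT => out; apply: no_bl.
  exact: (vertex_boundary_left inF_phi (same_vertex_sym (same_vertex_iter j y)) y_in out).
split; last 2 first.
- by apply: pcount0 => x [x_bl yx]; apply: no_bl; exists x.
- by apply: pcount0 => x [[x_bl _] yx]; apply: no_bl; exists x.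
set s := [seq iter j sigma y | j <- iota 0 8].
have -> : 8 = size s by rewrite size_map size_iota.
rewrite /at_vertex -(pcount_seq U_uniq (Q := fun x => x \in s)) //.
- by apply: pcount_le => x /mapP[j _ ->]; split=> //; apply: same_vertex_iter.
- by apply: uniq_iter_sigma => j k; apply: (iter_sigma_lt8_neq red_ok).
- by move=> x /mapP[j _ ->]; apply: U_in.
Qed.

Lemma vertex_excess y : inF y ->
  6 + at_vertex blue_start y <=
  at_vertex inF y + 3 * at_vertex (boundary_left inF) y + at_vertex blue_end y.
Proof.
move=> y_in.
case: (pselect (exists2 z, boundary_left inF z & same_vertex y z)) => [[z z_bl yz] | no_bl].
- have [t [arc t_ge2 t2_blue]] := arcs z_bl.
  have [-> -> -> ->] := arc_vertex_counts yz z_bl arc.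
  have := leq_b1 (~~ red z); case: (ltngtP t 3) => [t_lt3 | t_gt3 | ->] ?; last first.
  + by rewrite red_iter_sigma //=; lia.
  + by lia.
  have t2 : t = 2 by lia.
  by move: (t2_blue t2); rewrite t2 red_sigma // negbK => ->.
- by have [t8 -> ->] := interior_vertex_counts y_in no_bl; lia.
Qed.

Lemma count_faces F : nclasses inF (@same_face T) F -> pcount U inF = 3 * F.
Proof.
case/nclasses_mem => L <- [L_in cover dist].
rewrite (pcount_partition U dist _ cover); last first.
  by move=> y y' x yx y'x; apply: same_face_trans yx (same_face_sym y'x).
rewrite (eq_big_seq (fun=> 3)) => [|y /L_in y_in].
  by rewrite sum_nat_const_seq.
rewrite (pcount_seq U_uniq (s := [:: y; phi y; phi (phi y)])) //.
- rewrite /= !in_cons in_nil !orbF andbT; apply/andP; split; [apply/norP; split | ];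
    apply/eqP => e.
  + by apply: (@phi_neq _ y); rewrite -e.
  + by apply: (phi2_neq (esym e)).
  + by apply: (@phi_neq _ (phi y)); rewrite -e.
- by move=> x; rewrite !in_cons in_nil orbF => /or3P[] /eqP->; apply: U_in; rewrite ?inF_phi.
move=> x; rewrite !in_cons in_nil orbF.
split=> [[_ /same_faceP[] ->] | /or3P[] /eqP->]; rewrite ?eqxx ?orbT //.
- by split=> //; exists 0.
- by split; [rewrite inF_phi | apply: same_face_phi].
- by split; [rewrite !inF_phi | apply: same_face_phi2].
Qed.

Lemma count_edges E : nclasses (fun x => inF x \/ inF (alpha x)) (@same_edge T) E ->
  pcount U inF + pcount U (boundary_left inF) = 2 * E.
Proof.
case/nclasses_mem => L <- [L_in cover dist].
have -> : pcount U (boundary_left inF) = pcount U (fun x => ~ inF x /\ inF (alpha x)).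
  apply: (pcount_bij U_uniq (f := alpha)) => [|x [x_in _] | y [_ ay] | x [x_in ax] | y [y_out ay]].
  - exact: can_inj (@alphaK T).
  - exact: U_in.
  - by apply: U_all; right.
  - by rewrite alphaK.
  - by exists (alpha y); [split; rewrite ?alphaK | rewrite alphaK].
rewrite -(pcount_or U inF (fun x => inF (alpha x))) (pcount_partition U dist _ cover); last first.
  exact: same_edge_euclid.
rewrite (eq_big_seq (fun=> 2)) => [|y /L_in y_in].
  by rewrite sum_nat_const_seq.
rewrite (pcount_seq U_uniq (s := [:: y; alpha y])) //.
- rewrite /= in_cons in_nil orbF andbT; apply/eqP => e.
  exact: alpha_nofix y (esym e).
- move=> x; rewrite in_cons mem_seq1 => /orP[] /eqP->; apply: U_all => //.
  by rewrite alphaK; case: y_in; auto.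
move=> x; rewrite in_cons mem_seq1; split=> [[_ [] ->] | /orP[] /eqP->]; rewrite ?eqxx ?orbT //.
- by split=> //; left.
- by split; [rewrite alphaK; case: y_in; auto | right].
Qed.

Lemma count_blue_ends : pcount U blue_end = pcount U blue_start.
Proof.
apply: (pcount_bij U_uniq (f := fun x => alpha (sigma x))).
- by move=> x y /(can_inj (@alphaK T))/(can_inj (@sigmaK T)).
- by move=> x [x_in _]; apply: U_in.
- by move=> y [[y_in _] _]; apply: U_in.
- move=> x [x_in [sx_out x_blue]]; split; last by rewrite red_alpha // red_sigma // negbK.
  by split; [rewrite -inF_phi phi_alpha_sigma | rewrite alphaK].
- move=> y [[y_in ay_out] y_blue]; exists (phi y); last by rewrite sigma_phi alphaK.
  by split; [rewrite inF_phi | split; [rewrite sigma_phi | rewrite red_phi]].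
Qed.

Lemma boundary_left_phi x : boundary_left inF x -> ~ boundary_left inF (phi x).
Proof.
move=> [_ ax_out] /[dup] phix_bl /arcs[t [[arc_in _ _ _] t_ge2 _]].
by apply: ax_out; rewrite -sigma_phi; apply: (arc_in 1); lia.
Qed.

Lemma same_face_boundary_left x x' :
  boundary_left inF x -> boundary_left inF x' -> same_face x x' -> x = x'.
Proof.
move=> x_bl x'_bl /same_faceP[-> // | e | e]; first by case: (boundary_left_phi x_bl); rewrite -e.
by case: (boundary_left_phi x'_bl); rewrite e phi3.
Qed.

Section Euler.
Variables (lV : seq T) (V E F : nat).
Hypotheses (lV_size : size lV = V) (lV_reps : class_reps inF (@same_vertex T) lV).
Hypotheses (E_classes : nclasses (fun x => inF x \/ inF (alpha x)) (@same_edge T) E)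
  (F_classes : nclasses inF (@same_face T) F) (euler : V + F = E).

Lemma count_by_vertex Q : (forall x, Q x -> inF x) -> pcount U Q = \sum_(y <- lV) at_vertex Q y.
Proof.
move=> Q_in; case: lV_reps => _ lV_cover lV_distinct.
apply: pcount_partition lV_distinct _ _ => [y y' x yx y'x | x /Q_in/lV_cover //].
exact: same_vertex_trans yx (same_vertex_sym y'x).
Qed.

Lemma vertex_excess_eq y : y \in lV ->
  at_vertex inF y + 3 * at_vertex (boundary_left inF) y + at_vertex blue_end y =
  6 + at_vertex blue_start y.
Proof.
move=> yl; case: lV_reps => lV_in _ _.
apply: (sum_leq_eq (fun y yl => vertex_excess (lV_in y yl)) _ yl).
have := count_faces F_classes; have := count_edges E_classes; have := count_blue_ends.
rewrite big_split big_split -big_distrr big_split /= sum_nat_const_seq lV_size.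
rewrite -!count_by_vertex; first lia.
all: by move=> x; do ?case.
Qed.

Lemma vertex_has_start y : y \in lV -> exists2 z, boundary_left inF z & same_vertex y z.
Proof.
move=> yl; apply: contrapT => no_bl.
have [lV_in _ _] := lV_reps.
have [t8 b0 z0] := interior_vertex_counts (lV_in y yl) no_bl.
by have := vertex_excess_eq yl; rewrite b0 z0; lia.
Qed.

Lemma count_starts : pcount U (boundary_left inF) = V.
Proof.
rewrite count_by_vertex => [|x []//]; rewrite -lV_size -sum1_size.
apply: eq_big_seq => y /vertex_has_start[z z_bl yz].
by have [t [arc _ _]] := arcs z_bl; case: (arc_vertex_counts yz z_bl arc).
Qed.

Lemma faces_eq_vertices : F = V.
Proof.
by have := count_faces F_classes; have := count_edges E_classes; rewrite count_starts; lia.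
Qed.

Lemma face_has_start x : inF x -> exists2 x', same_face x x' & boundary_left inF x'.
Proof.
move=> x_in; case/nclasses_mem: F_classes => L sizeL [L_in cover distinct].
pose starts y := pcount U (fun x' => boundary_left inF x' /\ same_face y x').
have starts_le1 y : y \in L -> starts y <= 1.
  move=> _; apply: pcount_le1 => // x1 x2 [x1_bl yx1] [x2_bl yx2].
  exact: same_face_boundary_left x1_bl x2_bl (same_face_trans (same_face_sym yx1) yx2).
have sum_starts : \sum_(y <- L) 1 = \sum_(y <- L) starts y.
  rewrite sum1_size sizeL faces_eq_vertices -count_starts.
  apply: pcount_partition distinct _ _ => [y1 y2 x' yx' y'x' | x' [x'_in _]].
    exact: same_face_trans yx' (same_face_sym y'x').
  exact: cover.
have [y yL yx] := cover x x_in.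
have [x' [x'_bl yx']] : exists x', boundary_left inF x' /\ same_face y x'.
  apply: (pcount_gt0 (U := U)).
  by have := sum_leq_eq starts_le1 sum_starts yL; rewrite /starts => <-.
by exists x' => //; apply: same_face_trans (same_face_sym yx) yx'.
Qed.

Lemma arc_tight z t : boundary_left inF z -> reduced_arc red inF z t ->
  t + ~~ red (iter t.-1 sigma z) = 3 + ~~ red z.
Proof.
move=> z_bl [arc _ _]; have [_ lV_cover _] := lV_reps.
have [y yl yz] := lV_cover z z_bl.1.
have [ct cb ca cz] := arc_vertex_counts yz z_bl arc.
by have := vertex_excess_eq yl; rewrite ct cb ca cz; lia.
Qed.

Lemma face_start y : inF y -> inF (sigmai y) -> inF (sigma y) -> boundary_left inF (phi y).
Proof.
move=> y_in sy_in sy'_in; have [x' /same_faceP[] -> // [x'_in x'_out]] := face_has_start y_in.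
- by case: x'_out; rewrite inF_alpha.
- by case: x'_out; rewrite phi2 alphaK.
Qed.

(* The triangles of the corners [sigma z] and [g] have their boundary edges at
   [phi (sigma z)] and [phi g]; so the arc starting at [phi g] leaves K after two
   corners, and its colour condition determines the colour of [iter 3 sigma z]. *)
Lemma no_arc4 z : corner_arc inF z 4 -> ~~ red (iter 3 sigma z).
Proof.
move=> [arc_in _ _ _]; set g := iter 2 sigma z.
have g_start : boundary_left inF (phi g).
  apply: face_start; first exact: (arc_in 2); last exact: (arc_in 3).
  by rewrite sigmai_iterS; apply: (arc_in 1).
have sz_start : boundary_left inF (phi (sigma z)).
  apply: face_start; first exact: (arc_in 1); last exact: (arc_in 2).
  by rewrite sigmaK; apply: (arc_in 0).
have [t [[arc'_in _ _ _] t_ge2 t2_blue]] := arcs g_start.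
have sigma2_out : ~ inF (iter 2 sigma (phi g)).
  have -> : iter 2 sigma (phi g) = alpha (phi (sigma z)).
    rewrite /= sigma_phi; apply: (can_inj (@alphaK T)); rewrite alphaK; apply: phi_inj.
    by rewrite phi_alpha_sigma phi2.
  by case: sz_start.
have t2 : t = 2 by case: (ltngtP t 2) => // t_gt2; [lia | case: sigma2_out; apply: arc'_in].
by move: (t2_blue t2); rewrite sigma_phi red_alpha // /g !red_iter_sigma //=.
Qed.

Lemma arc_le3 z t : boundary_left inF z -> reduced_arc red inF z t -> t <= 3.
Proof.
move=> z_bl arc; have := arc_tight z_bl arc; have := leq_b1 (~~ red z).
case: (ltngtP t 4) => [| | t4]; [lia | lia |].
by case: arc => carc _ _; move: carc; rewrite t4 /= => /no_arc4 ->; lia.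
Qed.

Lemma starts_le_ends y : y \in lV -> at_vertex blue_start y <= at_vertex blue_end y.
Proof.
case/vertex_has_start=> z z_bl yz; have [t arc] := arcs z_bl.
have t_le3 := arc_le3 z_bl arc; case: arc => carc t_ge2 t2_blue.
have [_ _ -> ->] := arc_vertex_counts yz z_bl carc.
case: (ltngtP t 3) => [t_lt3 | | ->]; [ | lia | by rewrite red_iter_sigma].
have t2 : t = 2 by lia.
by move: (t2_blue t2); rewrite red_sigma // negbK => ->.
Qed.

Lemma arcs_length3 z t : boundary_left inF z -> reduced_arc red inF z t -> t = 3.
Proof.
move=> z_bl arc; have := arc_le3 z_bl arc; have tight := arc_tight z_bl arc.
case: arc => carc t_ge2 t2_blue; rewrite leq_eqVlt ltnS => /orP[/eqP // | t_le2].
have t2 : t = 2 by lia.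
have [_ lV_cover _] := lV_reps; have [y yl yz] := lV_cover z z_bl.1.
have ends_eq : \sum_(y <- lV) at_vertex blue_end y = \sum_(y <- lV) at_vertex blue_start y.
  by rewrite -!count_by_vertex ?count_blue_ends //; move=> x; do ?case.
have := sum_leq_eq starts_le_ends ends_eq yl.
have [_ _ -> ->] := arc_vertex_counts yz z_bl carc.
by move: tight (t2_blue t2); rewrite t2 red_sigma // negbK => + ->.
Qed.

Lemma blue_boundary_empty :
  (forall x, boundary_left inF x -> ~~ red x) -> forall z, ~ boundary_left inF z.
Proof.
move=> blue z z_bl; have [t [[arc_in _ _ _] t_ge2 _]] := arcs z_bl.
have [x' zx' x'_bl] := face_has_start (arc_in 1 t_ge2).
have := blue x' x'_bl; rewrite (red_same_face red_ok zx') red_sigma // negbK => red_z.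
by move: (blue z z_bl); rewrite red_z.
Qed.

End Euler.

End Annulus.

Lemma disjoint_walks_sym (T : tmap) n (w : nat -> T) n' w' :
  disjoint_walks n w n' w' -> disjoint_walks n' w' n w.
Proof. by move=> disj i j /same_vertex_sym; apply: disj. Qed.

Lemma boundary_at_walk (T : tmap) (inF : T -> Prop) n w n' w' :
  closed_walk n' w' -> disjoint_walks n w n' w' ->
  (forall x, boundary inF x <-> on_walk n w x \/ on_walk n' w' x) ->
  forall i x, same_vertex (w i) x -> boundary inF x -> on_walk n w x.
Proof.
move=> w'_closed disj bd i x wx /bd[// | /(on_walk_same_vertex w'_closed)[j w'x]].
by case: (disj i j); apply: same_vertex_trans wx (same_vertex_sym w'x).
Qed.

Theorem lemma3p6 (T : tmap) (red : T -> bool) (n n' : nat) (w w' : nat -> T) :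
  reducing red ->
  closed_walk n w -> simple_walk n w ->
  closed_walk n' w' -> simple_walk n' w' ->
  disjoint_walks n w n' w' ->
  bound_annulus n w n' w' ->
  ~ (reduced_walk red n w /\ reduced_walk red n' w').
Proof.
move=> red_ok w_closed w_simple w'_closed w'_simple disj [inF [inF_phi /finite_universe]].
move=> [U [U_uniq U_all]] bd_walks _ [V [E [F [V_cls E_cls F_cls euler]]]] [w_red w'_red].
have bd x : boundary inF x <-> on_walk n w x \/ on_walk n' w' x.
  by rewrite boundaryE; apply: bd_walks.
have bd' x : boundary inF x <-> on_walk n' w' x \/ on_walk n w x by rewrite bd or_comm.
have w_bd x (wx : on_walk n w x) : boundary inF x by apply/bd; left.
have w'_bd x (wx : on_walk n' w' x) : boundary inF x by apply/bd'; left.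
have bd_w := boundary_at_walk w'_closed disj bd.
have bd_w' := boundary_at_walk w_closed (disjoint_walks_sym disj) bd'.
have arcs x : boundary_left inF x -> exists t, reduced_arc red inF x t.
  move=> x_bl; case/bd: (boundary_left_boundary x_bl) => wx.
  - exact: (walk_arcs red_ok inF_phi w_simple w_red w_bd bd_w wx x_bl).
  - exact: (walk_arcs red_ok inF_phi w'_simple w'_red w'_bd bd_w' wx x_bl).
case/nclasses_mem: V_cls => lV lV_size lV_reps.
have arcs3 := arcs_length3 red_ok inF_phi arcs U_uniq U_all lV_size lV_reps E_cls F_cls euler.
have blue x : boundary_left inF x -> ~~ red x.
  move=> x_bl; case/bd: (boundary_left_boundary x_bl) => wx.
  - exact: (walk_blue red_ok inF_phi w_simple w_red w_bd bd_w arcs3 wx x_bl).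
  - exact: (walk_blue red_ok inF_phi w'_simple w'_red w'_bd bd_w' arcs3 wx x_bl).
have no_start := blue_boundary_empty red_ok inF_phi arcs U_uniq U_all lV_size lV_reps
  E_cls F_cls euler blue.
by case: (boundary_boundary_left (w_bd _ (on_walk_w w_red 0))) => /no_start.
Qed.
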